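(* Let $H$ satisfy (C3), (CNH), (CVX). Fix $T>0$ and a Lipschitz $W:\mathbb{R}\to\mathbb{R}$ with $I^{HJ}_T(W)\ne\emptyset$. Then for every $U_o\in I^{HJ}_T(W)$ and every $x\in\mathbb{R}$, $U_o(x)\ge U_o^*(x)$, where $U_o^*(x)=\sup\{W(q(T))-\int_0^TL(q(s),\dot q(s))\,ds:\ q\in\mathcal{R}_T,\ q(0)=x\}$.
   Context: (C3) $H\in C^3(\mathbb{R}^2;\mathbb{R})$; (CNH) there exists $X>0$ with $\partial_xH(x,p)=0$ whenever $|x|\ge X$; (CVX) for each $x$, $p\mapsto\partial_pH(x,p)$ is an increasing $C^1$-diffeomorphism of $\mathbb{R}$ onto itself. $L(x,v)=\sup_p(pv-H(x,p))$. $\mathcal{R}_T$: the $q\in C^1([0,T])$ such that some $p\in C^1([0,T])$ makes $(q,p)$ solve $\dot q=\partial_pH(q,p)$, $\dot p=-\partial_xH(q,p)$. $I^{HJ}_T(W)$: the set of Lipschitz $U_o$ such that the viscosity (Crandall–Lions) solution of $\partial_tU+H(x,\partial_xU)=0$, $U(0)=U_o$, equals $W$ at time $T$. *)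

From Stdlib Require Import Reals.
From Coquelicot Require Import Coquelicot.
Open Scope R_scope.

(* (C3): H is C^3 on R^2.  D i j is the partial derivative d_x^i d_p^j H;
   mixed derivatives are taken in either order (Schwarz), all continuous. *)
Definition C3 (H : R -> R -> R) : Prop :=
  exists D : nat -> nat -> R -> R -> R,
    (forall x p, D 0%nat 0%nat x p = H x p) /\
    (forall (i j : nat) x p, (i + j < 3)%nat ->
        is_derive (fun y => D i j y p) x (D (S i) j x p) /\
        is_derive (fun q => D i j x q) p (D i (S j) x p)) /\
    (forall (i j : nat) x p, (i + j <= 3)%nat -> continuity_2d_pt (D i j) x p).

Definition dxH (H : R -> R -> R) (x p : R) : R := Derive (fun y => H y p) x.
Definition dpH (H : R -> R -> R) (x p : R) : R := Derive (fun q => H x q) p.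

Definition CNH (H : R -> R -> R) : Prop :=
  exists X, 0 < X /\ forall x p, X <= Rabs x -> dxH H x p = 0.

Definition C1fun (f : R -> R) : Prop :=
  exists f' : R -> R, forall a, is_derive f a (f' a) /\ continuous f' a.

Definition CVX (H : R -> R -> R) : Prop :=
  forall x,
    (forall a b, a < b -> dpH H x a < dpH H x b) /\
    C1fun (dpH H x) /\
    exists g : R -> R,
      (forall a, g (dpH H x a) = a) /\ (forall b, dpH H x (g b) = b) /\ C1fun g.

Definition Lag (H : R -> R -> R) (x v : R) : R :=
  real (Lub_Rbar (fun y => exists p, y = p * v - H x p)).

Definition deriv_on (a b : R) (f f' : R -> R) : Prop :=
  forall t, a <= t <= b ->
    filterlim (fun h => (f (t + h) - f t) / h)
      (within (fun h => h <> 0 /\ a <= t + h <= b) (locally 0))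
      (locally (f' t)).

Definition cont_on (a b : R) (f : R -> R) : Prop :=
  forall t, a <= t <= b ->
    filterlim f (within (fun s => a <= s <= b) (locally t)) (locally (f t)).

Definition C1_on (a b : R) (f f' : R -> R) : Prop :=
  deriv_on a b f f' /\ cont_on a b f'.

Definition in_RT (H : R -> R -> R) (T : R) (q : R -> R) : Prop :=
  exists q' p p' : R -> R,
    C1_on 0 T q q' /\ C1_on 0 T p p' /\
    forall t, 0 <= t <= T ->
      q' t = dpH H (q t) (p t) /\ p' t = - dxH H (q t) (p t).

Definition Lipschitz (f : R -> R) : Prop :=
  exists K, forall x y, Rabs (f x - f y) <= K * Rabs (x - y).

Definition C1_2d (phi : R -> R -> R) (phit phix : R -> R -> R) : Prop :=
  forall t x,
    is_derive (fun s => phi s x) t (phit t x) /\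
    is_derive (fun y => phi t y) x (phix t x) /\
    continuity_2d_pt phit t x /\ continuity_2d_pt phix t x.

(* Crandall--Lions viscosity solution of U_t + H(x, U_x) = 0 on (0,T) x R,
   continuous on [0,T] x R (here: Lipschitz), with U(0,.) = U0. *)
Definition visc_sub_super (H : R -> R -> R) (T : R) (U : R -> R -> R) : Prop :=
  forall (phi phit phix : R -> R -> R) (t x : R), 0 < t < T ->
    C1_2d phi phit phix ->
    ((exists r, 0 < r /\ forall s y, 0 < s < T -> Rabs (s - t) < r -> Rabs (y - x) < r ->
        U s y - phi s y <= U t x - phi t x) ->
       phit t x + H x (phix t x) <= 0) /\
    ((exists r, 0 < r /\ forall s y, 0 < s < T -> Rabs (s - t) < r -> Rabs (y - x) < r ->
        U t x - phi t x <= U s y - phi s y) ->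
       phit t x + H x (phix t x) >= 0).

Definition Lipschitz_on_strip (T : R) (U : R -> R -> R) : Prop :=
  exists K, forall s t y x, 0 <= s <= T -> 0 <= t <= T ->
    Rabs (U s y - U t x) <= K * (Rabs (s - t) + Rabs (y - x)).

Definition visc_sol (H : R -> R -> R) (T : R) (U0 : R -> R) (U : R -> R -> R) : Prop :=
  Lipschitz_on_strip T U /\ (forall x, U 0 x = U0 x) /\ visc_sub_super H T U.

Definition I_HJ (H : R -> R -> R) (T : R) (W : R -> R) (U0 : R -> R) : Prop :=
  Lipschitz U0 /\ exists U, visc_sol H T U0 U /\ forall x, U T x = W x.

Definition Ustar (H : R -> R -> R) (T : R) (W : R -> R) (x : R) : Rbar :=
  Lub_Rbar (fun y => exists q q' : R -> R,
      in_RT H T q /\ deriv_on 0 T q q' /\ q 0 = x /\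
      y = W (q T) - RInt (fun s => Lag H (q s) (q' s)) 0 T).

(* Along a Hamiltonian curve (q, p) one has L(q, q') = p q' - H(q, p), so the action
   G(t) = \int_0^t L(q, q') is C^1 and, by convexity of H in p, calibrates the curve:
   r q' - H(q, r) <= G' for every r.  For a Lipschitz viscosity subsolution U this forces
   t |-> U(t, q(t)) - G(t) to be nonincreasing.  To see it, sup-convolve in space,
   m(t) = max_z [U(t, q(t) + z) - z^2 / (2 dl)] - G(t) - eps t.  If m increased somewhere,
   subtracting a steep nondecreasing penalty P would produce an interior maximum in time,
   where (t, y) |-> (y - q(t))^2 / (2 dl) + G(t) + eps t + P(t) touches U from above; the
   subsolution inequality there contradicts the eps-strict calibration once dl is small
   compared with the modulus of continuity of H.  Letting dl, eps -> 0 and t -> 0, T gives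
   W(q(T)) - \int_0^T L <= U_o(q(0)). *)

From Stdlib Require Import Reals Lra Psatz.
From Coquelicot Require Import Coquelicot.
Open Scope R_scope.

Lemma continuous_eps_delta (f : R -> R) (x : R) :
  continuous f x <->
  forall eps, 0 < eps ->
    exists d, 0 < d /\ forall y, Rabs (y - x) < d -> Rabs (f y - f x) < eps.
Proof.
  split.
  - intros Hf eps Heps.
    destruct (proj1 (filterlim_locally f (f x)) Hf (mkposreal eps Heps)) as [d Hd].
    exists d; split; [apply cond_pos |].
    intros y Hy; apply Hd, Hy.
  - intros Hf; apply filterlim_locally; intros eps.
    destruct (Hf eps (cond_pos eps)) as [d [Hd Hfd]].
    exists (mkposreal d Hd); intros y Hy; apply Hfd, Hy.
Qed.

Lemma cont_on_eps_delta (a b : R) (f : R -> R) :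
  cont_on a b f <->
  forall t, a <= t <= b -> forall eps, 0 < eps ->
    exists d, 0 < d /\ forall s, a <= s <= b -> Rabs (s - t) < d -> Rabs (f s - f t) < eps.
Proof.
  split.
  - intros Hf t Ht eps Heps.
    destruct (proj1 (filterlim_locally f (f t)) (Hf t Ht) (mkposreal eps Heps)) as [d Hd].
    exists d; split; [apply cond_pos |].
    intros s Hs Hst; apply Hd; [exact Hst | exact Hs].
  - intros Hf t Ht; apply filterlim_locally; intros eps.
    destruct (Hf t Ht eps (cond_pos eps)) as [d [Hd Hfd]].
    exists (mkposreal d Hd); intros s Hst Hs; apply Hfd; [exact Hs | exact Hst].
Qed.

Lemma continuity_pt_of_local_bound (f g : R -> R) (x d : R) :
  0 < d -> (forall y, Rabs (y - x) < d -> Rabs (f y - f x) <= g y) ->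
  continuity_pt g x -> g x = 0 -> continuity_pt f x.
Proof.
  intros Hd Hfg Hg Hgx; apply continuity_pt_filterlim, continuous_eps_delta.
  intros eps Heps.
  destruct (proj1 (continuous_eps_delta g x) (proj1 (continuity_pt_filterlim g x) Hg) eps Heps)
    as [d' [Hd' Hgd]].
  exists (Rmin d d'); split; [now apply Rmin_pos |].
  intros y Hy.
  specialize (Hgd y (Rlt_le_trans _ _ _ Hy (Rmin_r d d'))).
  rewrite Hgx, Rminus_0_r in Hgd.
  eapply Rle_lt_trans; [apply Hfg, (Rlt_le_trans _ _ _ Hy (Rmin_l d d')) |].
  eapply Rle_lt_trans; [apply Rle_abs | exact Hgd].
Qed.

Lemma continuous_cont_on (a b : R) (f : R -> R) : (forall t, continuous f t) -> cont_on a b f.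
Proof.
  intros Hf t _; apply (filterlim_filter_le_1 f (filter_le_within (F := locally t) _)), Hf.
Qed.

Lemma cont_on_minus (a b : R) (f g : R -> R) :
  cont_on a b f -> cont_on a b g -> cont_on a b (fun t => f t - g t).
Proof.
  rewrite !cont_on_eps_delta; intros Hf Hg t Ht eps Heps.
  destruct (Hf t Ht (eps / 2) ltac:(lra)) as [df [Hdf Hf']].
  destruct (Hg t Ht (eps / 2) ltac:(lra)) as [dg [Hdg Hg']].
  exists (Rmin df dg); split; [now apply Rmin_pos |]; intros s Hs Hst.
  generalize (Hf' s Hs (Rlt_le_trans _ _ _ Hst (Rmin_l df dg))),
    (Hg' s Hs (Rlt_le_trans _ _ _ Hst (Rmin_r df dg))),
    (Rabs_triang (f s - f t) (- (g s - g t))).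
  rewrite Rabs_Ropp; replace (f s - f t + - (g s - g t)) with (f s - g s - (f t - g t)) by ring.
  lra.
Qed.

Definition clamp (a b s : R) : R := Rmax a (Rmin b s).

Lemma clamp_in (a b s : R) : a <= b -> a <= clamp a b s <= b.
Proof. intros; unfold clamp, Rmax, Rmin; repeat destruct Rle_dec; lra. Qed.

Lemma clamp_id (a b s : R) : a <= s <= b -> clamp a b s = s.
Proof. intros; unfold clamp, Rmax, Rmin; repeat destruct Rle_dec; lra. Qed.

Lemma clamp_dist (a b s u : R) : a <= b -> Rabs (clamp a b s - clamp a b u) <= Rabs (s - u).
Proof.
  intros; unfold clamp, Rmax, Rmin; repeat destruct Rle_dec;
    unfold Rabs; repeat destruct Rcase_abs; lra.
Qed.

Lemma cont_on_clamp (a b : R) (f : R -> R) :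
  a <= b -> cont_on a b f -> forall s, continuous (fun u => f (clamp a b u)) s.
Proof.
  intros Hab Hf s; apply continuous_eps_delta; intros eps Heps.
  destruct (proj1 (cont_on_eps_delta a b f) Hf (clamp a b s) (clamp_in a b s Hab) eps Heps)
    as [d [Hd Hfd]].
  exists d; split; [exact Hd |]; intros y Hy.
  apply Hfd; [now apply clamp_in |].
  eapply Rle_lt_trans; [apply clamp_dist, Hab | exact Hy].
Qed.

Lemma deriv_on_is_derive (a b : R) (f f' : R -> R) (t : R) :
  deriv_on a b f f' -> a < t < b -> is_derive f t (f' t).
Proof.
  intros Hf Ht; apply is_derive_Reals; intros eps Heps.
  assert (Ht' : a <= t <= b) by lra.
  destruct (proj1 (filterlim_locally _ (f' t)) (Hf t Ht') (mkposreal eps Heps))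
    as [d Hd].
  assert (Hpos : 0 < Rmin d (Rmin (t - a) (b - t)))
    by (apply Rmin_pos; [apply cond_pos | apply Rmin_pos; lra]).
  exists (mkposreal _ Hpos); intros h Hh Hhd; simpl in Hhd.
  assert (H1 := Rmin_l d (Rmin (t - a) (b - t))).
  assert (H2 := Rmin_r d (Rmin (t - a) (b - t))).
  assert (H3 := Rmin_l (t - a) (b - t)). assert (H4 := Rmin_r (t - a) (b - t)).
  apply Hd; [change (Rabs (h - 0) < d); rewrite Rminus_0_r; lra |].
  split; [exact Hh |]. apply Rabs_lt_between in Hhd; lra.
Qed.

Lemma deriv_on_cont_on (a b : R) (f f' : R -> R) : deriv_on a b f f' -> cont_on a b f.
Proof.
  intros Hf; apply cont_on_eps_delta; intros t Ht eps Heps.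
  destruct (proj1 (filterlim_locally _ (f' t)) (Hf t Ht) (mkposreal 1 Rlt_0_1)) as [d Hd].
  set (C := Rabs (f' t) + 1).
  assert (HC : 0 < C) by (unfold C; generalize (Rabs_pos (f' t)); lra).
  assert (Hlip : forall s, a <= s <= b -> Rabs (s - t) < d ->
                   Rabs (f s - f t) <= C * Rabs (s - t)).
  { intros s Hs Hst.
    destruct (Req_dec s t) as [-> | Hne]; [rewrite !Rminus_diag, Rabs_R0; lra |].
    assert (Hq : Rabs ((f s - f t) / (s - t) - f' t) < 1).
    { replace s with (t + (s - t)) at 1 by ring.
      apply Hd; [change (Rabs (s - t - 0) < d); rewrite Rminus_0_r; exact Hst |].
      split; [lra | replace (t + (s - t)) with s by ring; exact Hs]. }
    replace (f s - f t) with ((f s - f t) / (s - t) * (s - t)) by (field; lra).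
    rewrite Rabs_mult; apply Rmult_le_compat_r; [apply Rabs_pos |].
    generalize (Rabs_triang_inv ((f s - f t) / (s - t)) (f' t)); unfold C; lra. }
  exists (Rmin d (eps / C));
    split; [apply Rmin_pos; [apply cond_pos | now apply Rdiv_lt_0_compat] |].
  intros s Hs Hst.
  eapply Rle_lt_trans;
    [apply Hlip; [exact Hs | eapply Rlt_le_trans; [exact Hst | apply Rmin_l]] |].
  apply Rlt_le_trans with (C * (eps / C)); [| right; field; lra].
  apply Rmult_lt_compat_l; [exact HC | eapply Rlt_le_trans; [exact Hst | apply Rmin_r]].
Qed.

Lemma is_derive_RInt_continuous (f : R -> R) (a : R) :
  (forall x, continuous f x) -> forall x, is_derive (fun y => RInt f a y) x (f x).
Proof.
  intros Hf x; apply (is_derive_RInt f _ a x); [| apply Hf].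
  exists (mkposreal 1 Rlt_0_1); intros y _.
  apply (RInt_correct (V := R_CompleteNormedModule)), ex_RInt_continuous.
  intros; apply Hf.
Qed.

Definition C1_R (F F' : R -> R) : Prop := forall t, is_derive F t (F' t) /\ continuous F' t.

Lemma C1_R_continuity_pt (F F' : R -> R) : C1_R F F' -> forall t, continuity_pt F t.
Proof.
  intros HF t; apply continuity_pt_filterlim, (ex_derive_continuous F).
  exists (F' t); apply HF.
Qed.

Lemma C1_R_plus_linear (F F' : R -> R) (c : R) :
  C1_R F F' -> C1_R (fun t => F t + c * t) (fun t => F' t + c).
Proof.
  intros HF t; destruct (HF t) as [HF't HF'c]; split.
  - auto_derive; [eexists; eassumption |].
    replace (Derive (fun x => F x) t) with (F' t) by (symmetry; now apply is_derive_unique).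
    ring.
  - apply (continuous_plus F' (fun _ => c)); [exact HF'c | apply continuous_const].
Qed.

Lemma C1_on_extend (a b : R) (f f' : R -> R) :
  a < b -> C1_on a b f f' ->
  exists F F', C1_R F F' /\ forall t, a < t < b -> F t = f t /\ F' t = f' t.
Proof.
  intros Hab [Hf Hf'].
  set (m := (a + b) / 2).
  set (F' := fun s => f' (clamp a b s)).
  set (F := fun s => f m + RInt F' m s).
  assert (HF'c : forall s, continuous F' s) by (apply cont_on_clamp; [lra | exact Hf']).
  assert (HF : C1_R F F').
  { intros t; split; [| apply HF'c].
    unfold F; rewrite <- (Rplus_0_l (F' t)).
    apply (is_derive_plus (fun _ => f m)); [exact (is_derive_const (f m) t) |].
    apply is_derive_RInt_continuous, HF'c. }
  assert (HF'f' : forall t, a < t < b -> F' t = f' t)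
    by (intros t Ht; unfold F'; rewrite clamp_id; lra).
  exists F, F'; split; [exact HF |]; intros t Ht; split; [| now apply HF'f'].
  assert (Hin : forall s, Rmin m t <= s <= Rmax m t -> a < s < b).
  { intros s Hs; unfold m in *; split.
    - eapply Rlt_le_trans; [| apply Hs]; apply Rmin_glb_lt; lra.
    - eapply Rle_lt_trans; [apply Hs |]; apply Rmax_lub_lt; lra. }
  destruct (MVT_gen (fun s => F s - f s) m t (fun _ => 0)) as [c [_ Hc]].
  - intros s Hs; rewrite <- (Rminus_diag (F' s)).
    apply (is_derive_minus F f); [apply HF |].
    rewrite HF'f' by (apply Hin; lra); apply (deriv_on_is_derive a b f f' s Hf), Hin; lra.
  - intros s Hs; apply continuity_pt_filterlim, (continuous_minus F f).
    + apply (ex_derive_continuous F); exists (F' s); apply HF.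
    + apply (ex_derive_continuous f); exists (f' s).
      apply (deriv_on_is_derive a b f f' s Hf), Hin, Hs.
  - unfold F in Hc at 2; rewrite RInt_point in Hc; simpl in Hc.
    change (zero : R) with 0 in Hc; lra.
Qed.

Lemma cont_on_antitone_endpoints (a b : R) (f : R -> R) :
  a < b -> cont_on a b f -> (forall s t, a < s -> s < t -> t < b -> f t <= f s) -> f b <= f a.
Proof.
  intros Hab Hf Hmono; apply Rle_plus_epsilon; intros e He.
  destruct (proj1 (cont_on_eps_delta a b f) Hf a ltac:(lra) (e / 2) ltac:(lra))
    as [da [Hda Hfa]].
  destruct (proj1 (cont_on_eps_delta a b f) Hf b ltac:(lra) (e / 2) ltac:(lra))
    as [db [Hdb Hfb]].
  set (s := a + Rmin (da / 2) ((b - a) / 3)).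
  set (t := b - Rmin (db / 2) ((b - a) / 3)).
  assert (H1 := Rmin_l (da / 2) ((b - a) / 3)). assert (H2 := Rmin_r (da / 2) ((b - a) / 3)).
  assert (H3 := Rmin_l (db / 2) ((b - a) / 3)). assert (H4 := Rmin_r (db / 2) ((b - a) / 3)).
  assert (H5 : 0 < Rmin (da / 2) ((b - a) / 3)) by (apply Rmin_pos; lra).
  assert (H6 : 0 < Rmin (db / 2) ((b - a) / 3)) by (apply Rmin_pos; lra).
  assert (Hst := Hmono s t ltac:(unfold s; lra) ltac:(unfold s, t; lra) ltac:(unfold t; lra)).
  assert (Es := Hfa s ltac:(unfold s; lra) ltac:(unfold s; rewrite Rabs_pos_eq; lra)).
  assert (Et := Hfb t ltac:(unfold t; lra)
                  ltac:(unfold t; rewrite Rabs_minus_sym, Rabs_pos_eq; lra)).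
  apply Rabs_lt_between in Es; apply Rabs_lt_between in Et; lra.
Qed.

Lemma C3_continuity_2d (H : R -> R -> R) : C3 H -> forall x p, continuity_2d_pt H x p.
Proof.
  intros [D [HD0 [_ HDc]]] x p.
  apply continuity_2d_pt_ext with (D 0%nat 0%nat); [intros; apply HD0 |].
  apply HDc; lia.
Qed.

Lemma C3_is_derive_dpH (H : R -> R -> R) :
  C3 H -> forall x p, is_derive (fun q => H x q) p (dpH H x p).
Proof.
  intros [D [HD0 [HDd _]]] x p.
  assert (Hd : is_derive (fun q => H x q) p (D 0%nat 1%nat x p)).
  { apply is_derive_ext with (fun q => D 0%nat 0%nat x q); [intros; apply HD0 |].
    apply (HDd 0%nat 0%nat x p); lia. }
  replace (dpH H x p) with (D 0%nat 1%nat x p); [exact Hd |].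
  symmetry; apply is_derive_unique, Hd.
Qed.

Lemma CVX_supporting_line (H : R -> R -> R) :
  C3 H -> CVX H -> forall x p r, H x p + dpH H x p * (r - p) <= H x r.
Proof.
  intros HC3 HCVX x p r.
  destruct (HCVX x) as [Hmono _].
  destruct (MVT_gen (fun q => H x q) p r (dpH H x)) as [c [Hc Hmvt]].
  - intros; apply C3_is_derive_dpH, HC3.
  - intros q _; apply continuity_pt_filterlim, (ex_derive_continuous (fun q => H x q)).
    exists (dpH H x q); apply C3_is_derive_dpH, HC3.
  - simpl in Hmvt.
    destruct (Rtotal_order p r) as [Hpr | [<- | Hpr]]; [| lra |].
    + rewrite Rmin_left, Rmax_right in Hc by lra.
      assert (dpH H x p <= dpH H x c)
        by (destruct (Req_dec p c) as [-> | Hpc]; [lra | left; apply Hmono; lra]).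
      nra.
    + rewrite Rmin_right, Rmax_left in Hc by lra.
      assert (dpH H x c <= dpH H x p)
        by (destruct (Req_dec p c) as [-> | Hpc]; [lra | left; apply Hmono; lra]).
      nra.
Qed.

Lemma Lag_dpH (H : R -> R -> R) :
  C3 H -> CVX H -> forall x p, Lag H x (dpH H x p) = p * dpH H x p - H x p.
Proof.
  intros HC3 HCVX x p; unfold Lag.
  rewrite (is_lub_Rbar_unique _ (Finite (p * dpH H x p - H x p))); [reflexivity |].
  split.
  - intros y [r ->]; simpl.
    generalize (CVX_supporting_line H HC3 HCVX x p r); nra.
  - intros l Hl; apply Hl; exists p; reflexivity.
Qed.

Lemma sqr_Rabs (z : R) : z * z = Rabs z * Rabs z.
Proof. rewrite <- Rabs_mult, Rabs_pos_eq; [reflexivity | apply Rle_0_sqr]. Qed.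

Lemma linear_sub_quadratic_le (K dl z : R) :
  0 < dl -> K * Rabs z - z * z / (2 * dl) <= K * K * dl / 2.
Proof.
  intros Hdl; rewrite sqr_Rabs.
  replace (K * Rabs z - Rabs z * Rabs z / (2 * dl)) with
    (K * K * dl / 2 - (Rabs z - K * dl) * (Rabs z - K * dl) / (2 * dl)) by (field; lra).
  assert (0 <= (Rabs z - K * dl) * (Rabs z - K * dl) / (2 * dl))
    by (apply Rdiv_le_0_compat; [apply Rle_0_sqr | lra]).
  lra.
Qed.

Lemma linear_sub_quadratic_nonpos (K dl z : R) :
  0 < dl -> 2 * K * dl <= Rabs z -> K * Rabs z - z * z / (2 * dl) <= 0.
Proof.
  intros Hdl Hz; rewrite sqr_Rabs.
  replace (K * Rabs z - Rabs z * Rabs z / (2 * dl)) with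
    (- (Rabs z * (Rabs z - 2 * K * dl) / (2 * dl))) by (field; lra).
  assert (0 <= Rabs z * (Rabs z - 2 * K * dl) / (2 * dl))
    by (apply Rdiv_le_0_compat; [apply Rmult_le_pos; [apply Rabs_pos | lra] | lra]).
  lra.
Qed.

Lemma interior_max_after_penalty (m : R -> R) (a b c : R) :
  a < b -> b < c -> (forall t, a <= t <= c -> continuity_pt m t) -> m a < m b ->
  exists P Pd th, C1_R P Pd /\ 0 <= Pd th /\ a < th < c /\
    forall t, a <= t <= c -> m t - P t <= m th - P th.
Proof.
  intros Hab Hbc Hm Hmab.
  set (lam := Rabs (m c - m b) + (m b - m a) + 1).
  assert (Hlam : 0 < lam) by (unfold lam; generalize (Rabs_pos (m c - m b)); lra).
  assert (Hr : Rabs ((b - a) / (c - a)) < 1).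
  { rewrite Rabs_pos_eq by (apply Rdiv_le_0_compat; lra).
    apply Rmult_lt_reg_r with (c - a); [lra |].
    unfold Rdiv; rewrite Rmult_assoc, Rinv_l; lra. }
  destruct (pow_lt_1_zero _ Hr ((m b - m a) / lam) ltac:(apply Rdiv_lt_0_compat; lra))
    as [N HN].
  (* P vanishes at a, stays below m b - m a at b and exceeds m c - m b at c,
     so the maximum of m - P over [a, c] is interior. *)
  set (P := fun t => lam * ((t - a) / (c - a)) ^ S N).
  set (Pd := fun t => lam * (INR (S N) * ((t - a) / (c - a)) ^ N / (c - a))).
  assert (HP : C1_R P Pd).
  { intros t; split.
    - unfold P, Pd; auto_derive; [auto |].
      change (match N with 0%nat => 1 | S _ => INR N + 1 end) with (INR (S N)).
      unfold Rdiv, Rminus; ring.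
    - apply (ex_derive_continuous Pd); unfold Pd; auto_derive; auto. }
  assert (HPb : P b < m b - m a).
  { specialize (HN (S N) ltac:(lia)); apply Rabs_lt_between in HN.
    unfold P; apply Rmult_lt_reg_l with (/ lam); [now apply Rinv_0_lt_compat |].
    rewrite <- Rmult_assoc, Rinv_l, Rmult_1_l by lra.
    rewrite Rmult_comm; unfold Rdiv in HN; lra. }
  assert (HPa : P a = 0) by (unfold P; unfold Rdiv; rewrite Rminus_diag, Rmult_0_l; simpl; ring).
  assert (HPc : P c = lam) by (unfold P; unfold Rdiv; rewrite Rinv_r, pow1 by lra; ring).
  destruct (continuity_ab_maj (fun t => m t - P t) a c ltac:(lra)) as [th [Hmax Hth]].
  { intros t Ht; apply continuity_pt_minus; [now apply Hm |].
    apply continuity_pt_filterlim, (ex_derive_continuous P); exists (Pd t); apply HP. }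
  assert (Hb := Hmax b ltac:(lra)).
  assert (Hth_a : th <> a) by (intros ->; rewrite HPa in Hb; lra).
  assert (Hth_c : th <> c).
  { intros ->; rewrite HPc in Hb; generalize (Rle_abs (m c - m b)); unfold lam in Hb; lra. }
  exists P, Pd, th; split; [exact HP |]; split; [| split; [lra | exact Hmax]].
  unfold Pd; apply Rmult_le_pos; [lra |].
  apply Rdiv_le_0_compat; [| lra]; apply Rmult_le_pos; [apply pos_INR |].
  apply pow_le, Rdiv_le_0_compat; lra.
Qed.

Definition strip_lipschitz (T K : R) (U : R -> R -> R) : Prop :=
  forall s t y x, 0 <= s <= T -> 0 <= t <= T ->
    Rabs (U s y - U t x) <= K * (Rabs (s - t) + Rabs (y - x)).

Lemma Lipschitz_on_strip_nonneg (T : R) (U : R -> R -> R) :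
  Lipschitz_on_strip T U -> exists K, 0 <= K /\ strip_lipschitz T K U.
Proof.
  intros [K HK]; exists (Rabs K); split; [apply Rabs_pos |].
  intros s t y x Hs Ht; eapply Rle_trans; [now apply HK |].
  apply Rmult_le_compat_r; [| apply Rle_abs].
  generalize (Rabs_pos (s - t)), (Rabs_pos (y - x)); lra.
Qed.

Lemma strip_lipschitz_cont_on (T K : R) (U : R -> R -> R) (q : R -> R) :
  strip_lipschitz T K U -> 0 <= K -> cont_on 0 T q -> cont_on 0 T (fun t => U t (q t)).
Proof.
  rewrite !cont_on_eps_delta; intros HU HK Hq t Ht eps Heps.
  set (e := eps / (2 * (K + 1))).
  assert (He : 0 < e) by (apply Rdiv_lt_0_compat; lra).
  destruct (Hq t Ht e He) as [d [Hd Hq']].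
  exists (Rmin d e); split; [now apply Rmin_pos |]; intros s Hs Hst.
  assert (Hst' : Rabs (s - t) + Rabs (q s - q t) <= 2 * e).
  { generalize (Hq' s Hs (Rlt_le_trans _ _ _ Hst (Rmin_l d e))), (Rmin_r d e); lra. }
  eapply Rle_lt_trans; [apply HU; [exact Hs | exact Ht] |].
  apply Rle_lt_trans with (K * (2 * e)); [now apply Rmult_le_compat_l |].
  apply Rlt_le_trans with ((K + 1) * (2 * e));
    [apply Rmult_lt_compat_r; lra | right; unfold e; field; lra].
Qed.

Definition visc_sub (H : R -> R -> R) (T : R) (U : R -> R -> R) : Prop :=
  forall (phi phit phix : R -> R -> R) (t x : R), 0 < t < T ->
    C1_2d phi phit phix ->
    (exists r, 0 < r /\ forall s y, 0 < s < T -> Rabs (s - t) < r -> Rabs (y - x) < r ->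
        U s y - phi s y <= U t x - phi t x) ->
    phit t x + H x (phix t x) <= 0.

Section SupConvolution.

Variables (U : R -> R -> R) (T K dl : R) (Q Qd G Gd : R -> R).
Hypothesis U_lip : strip_lipschitz T K U.
Hypothesis K_ge0 : 0 <= K.
Hypothesis dl_gt0 : 0 < dl.
Hypothesis Q_C1 : C1_R Q Qd.
Hypothesis G_C1 : C1_R G Gd.

Definition penalized (t z : R) : R := U t (Q t + z) - z * z / (2 * dl) - G t.

(* The maximisation is restricted to |z| <= 2 K dl so that a maximiser exists;
   by [penalized_le_supconv] this radius loses nothing. *)
Definition supconv (t : R) : R :=
  real (Lub_Rbar (fun v => exists z, Rabs z <= 2 * K * dl /\ v = penalized t z)).

Lemma penalized_continuity_pt (t z : R) : 0 <= t <= T -> continuity_pt (penalized t) z.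
Proof.
  intros Ht.
  assert (HU : continuity_pt (U t) (Q t + z)).
  { apply (continuity_pt_of_local_bound _ (fun y => K * Rabs (y - (Q t + z))) _ 1);
      [lra | | reg | now rewrite Rminus_diag, Rabs_R0, Rmult_0_r].
    intros y _; eapply Rle_trans; [apply U_lip; exact Ht |].
    rewrite Rminus_diag, Rabs_R0, Rplus_0_l; lra. }
  unfold penalized; reg.
Qed.

Lemma penalized_sub_center (t z : R) :
  0 <= t <= T -> penalized t z - penalized t 0 <= K * Rabs z - z * z / (2 * dl).
Proof.
  intros Ht; unfold penalized.
  generalize (U_lip t t (Q t + z) (Q t + 0) Ht Ht).
  rewrite Rminus_diag, Rabs_R0, Rplus_0_l.
  replace (Q t + z - (Q t + 0)) with z by ring.
  intros Hz; apply Rabs_le_between in Hz.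
  unfold Rdiv; rewrite Rmult_0_l, Rmult_0_l; lra.
Qed.

Lemma supconv_attained (t : R) :
  0 <= t <= T ->
  exists z, Rabs z <= 2 * K * dl /\ supconv t = penalized t z /\
    forall z', Rabs z' <= 2 * K * dl -> penalized t z' <= penalized t z.
Proof.
  intros Ht.
  assert (HR : 0 <= 2 * K * dl) by nra.
  assert (Hc : forall z, - (2 * K * dl) <= z <= 2 * K * dl -> continuity_pt (penalized t) z)
    by (intros; now apply penalized_continuity_pt).
  destruct (continuity_ab_maj (penalized t) (- (2 * K * dl)) (2 * K * dl) ltac:(lra) Hc)
    as [z [Hmax Hz]].
  assert (Hmax' : forall z', Rabs z' <= 2 * K * dl -> penalized t z' <= penalized t z)
    by (intros z' Hz'; apply Hmax, Rabs_le_between, Hz').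
  exists z; split; [now apply Rabs_le_between |]; split; [| exact Hmax'].
  unfold supconv; rewrite (is_lub_Rbar_unique _ (Finite (penalized t z))); [reflexivity |].
  split.
  - intros v [z' [Hz' ->]]; apply Hmax', Hz'.
  - intros l Hl; apply Hl; exists z; split; [now apply Rabs_le_between | reflexivity].
Qed.

Lemma penalized_le_supconv (t z : R) : 0 <= t <= T -> penalized t z <= supconv t.
Proof.
  intros Ht; destruct (supconv_attained t Ht) as [zm [_ [-> Hmax]]].
  destruct (Rle_lt_dec (Rabs z) (2 * K * dl)) as [Hz | Hz]; [now apply Hmax |].
  apply Rle_trans with (penalized t 0).
  - generalize (penalized_sub_center t z Ht),
      (linear_sub_quadratic_nonpos K dl z dl_gt0 ltac:(lra)); lra.
  - apply Hmax; rewrite Rabs_R0; nra.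
Qed.

Lemma supconv_ge (t : R) : 0 <= t <= T -> U t (Q t) - G t <= supconv t.
Proof.
  intros Ht; eapply Rle_trans; [| apply (penalized_le_supconv t 0 Ht)].
  unfold penalized; rewrite Rplus_0_r; unfold Rdiv; rewrite !Rmult_0_l; lra.
Qed.

Lemma supconv_le (t : R) :
  0 <= t <= T -> supconv t <= U t (Q t) - G t + K * K * dl / 2.
Proof.
  intros Ht; destruct (supconv_attained t Ht) as [z [_ [-> _]]].
  generalize (penalized_sub_center t z Ht), (linear_sub_quadratic_le K dl z dl_gt0).
  unfold penalized at 2; rewrite Rplus_0_r; unfold Rdiv; rewrite !Rmult_0_l; lra.
Qed.

Lemma supconv_sub_le (s t : R) :
  0 <= s <= T -> 0 <= t <= T ->
  supconv s - supconv t <= K * (Rabs (s - t) + Rabs (Q s - Q t)) + Rabs (G s - G t).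
Proof.
  intros Hs Ht.
  destruct (supconv_attained s Hs) as [z [_ [-> _]]].
  apply Rle_trans with (penalized s z - penalized t z);
    [generalize (penalized_le_supconv t z Ht); lra |].
  generalize (U_lip s t (Q s + z) (Q t + z) Hs Ht), (Rle_abs (- (G s - G t))).
  rewrite Rabs_Ropp; replace (Q s + z - (Q t + z)) with (Q s - Q t) by ring.
  intros HUst; apply Rabs_le_between in HUst; unfold penalized; lra.
Qed.

Lemma supconv_continuity_pt (t : R) : 0 < t < T -> continuity_pt supconv t.
Proof.
  intros Ht.
  apply (continuity_pt_of_local_bound _
           (fun s => K * (Rabs (s - t) + Rabs (Q s - Q t)) + Rabs (G s - G t)) t (Rmin t (T - t))).
  - apply Rmin_pos; lra.
  - intros s Hs.
    assert (Hs' : 0 <= s <= T).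
    { generalize (Rmin_l t (T - t)), (Rmin_r t (T - t)); apply Rabs_lt_between in Hs; lra. }
    apply Rabs_le_between; split.
    + generalize (supconv_sub_le t s ltac:(lra) Hs').
      rewrite (Rabs_minus_sym t s), (Rabs_minus_sym (Q t)), (Rabs_minus_sym (G t)); lra.
    + apply supconv_sub_le; lra.
  - generalize (C1_R_continuity_pt Q Qd Q_C1 t), (C1_R_continuity_pt G Gd G_C1 t); intros; reg.
  - rewrite !Rminus_diag, Rabs_R0; ring.
Qed.

Definition supconv_test (P : R -> R) (s y : R) : R :=
  (y - Q s) * (y - Q s) / (2 * dl) + G s + P s.

Lemma supconv_test_C1 (P Pd : R -> R) :
  C1_R P Pd ->
  C1_2d (supconv_test P) (fun s y => - ((y - Q s) * Qd s) / dl + Gd s + Pd s)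
    (fun s y => (y - Q s) / dl).
Proof.
  intros HP s y.
  destruct (Q_C1 s) as [HQd HQdc], (G_C1 s) as [HGd HGdc], (HP s) as [HPd HPdc].
  assert (Hfst : forall f : R -> R, continuity_pt f s ->
                   continuity_2d_pt (fun u _ => f u) s y).
  { intros f Hf; apply (continuity_1d_2d_pt_comp f (fun u _ => u)); [exact Hf |].
    apply continuity_2d_pt_id1. }
  assert (Hcont : continuity_2d_pt (fun u v => v - Q u) s y).
  { apply continuity_2d_pt_minus; [apply continuity_2d_pt_id2 |].
    apply Hfst, (C1_R_continuity_pt Q Qd Q_C1). }
  unfold supconv_test; split; [| split; [| split]].
  - auto_derive; [repeat split; eexists; eassumption |].
    replace (Derive (fun x => Q x) s) with (Qd s) by (symmetry; now apply is_derive_unique).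
    replace (Derive (fun x => G x) s) with (Gd s) by (symmetry; now apply is_derive_unique).
    replace (Derive (fun x => P x) s) with (Pd s) by (symmetry; now apply is_derive_unique).
    field; lra.
  - auto_derive; [auto | field; lra].
  - unfold Rdiv; repeat apply continuity_2d_pt_plus;
      [| apply Hfst, continuity_pt_filterlim, HGdc | apply Hfst, continuity_pt_filterlim, HPdc].
    apply continuity_2d_pt_mult; [| apply continuity_2d_pt_const].
    apply continuity_2d_pt_opp, continuity_2d_pt_mult;
      [exact Hcont | apply Hfst, continuity_pt_filterlim, HQdc].
  - unfold Rdiv; apply continuity_2d_pt_mult; [exact Hcont | apply continuity_2d_pt_const].
Qed.

Lemma supconv_test_touches_above (P : R -> R) (a c th z : R) :
  0 <= a -> c <= T -> a < th < c -> supconv th = penalized th z ->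
  (forall t, a <= t <= c -> supconv t - P t <= supconv th - P th) ->
  exists r, 0 < r /\ forall s y, 0 < s < T -> Rabs (s - th) < r -> Rabs (y - (Q th + z)) < r ->
    U s y - supconv_test P s y <= U th (Q th + z) - supconv_test P th (Q th + z).
Proof.
  intros Ha Hc Hth Hz Hmax.
  exists (Rmin (th - a) (c - th)); split; [apply Rmin_pos; lra |].
  intros s y _ Hs _.
  assert (Hs' : a < s < c).
  { generalize (Rmin_l (th - a) (c - th)), (Rmin_r (th - a) (c - th)).
    apply Rabs_lt_between in Hs; lra. }
  generalize (penalized_le_supconv s (y - Q s) ltac:(lra)), (Hmax s ltac:(lra)).
  rewrite Hz; unfold penalized, supconv_test.
  replace (Q s + (y - Q s)) with y by ring.
  replace (Q th + z - Q th) with z by ring.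
  lra.
Qed.

Lemma supconv_antitone (H : R -> R -> R) (a b c : R) :
  visc_sub H T U -> 0 < a -> a < b -> b < c -> c < T ->
  (forall t y r, a < t < c -> Rabs r <= 2 * K -> Rabs (y - Q t) <= 2 * K * dl ->
     r * Qd t - H y r < Gd t) ->
  supconv b <= supconv a.
Proof.
  intros Hsub Ha Hab Hbc Hc Hstrict.
  destruct (Rle_lt_dec (supconv b) (supconv a)) as [Hle | Hlt]; [exact Hle | exfalso].
  destruct (interior_max_after_penalty supconv a b c Hab Hbc)
    as (P & Pd & th & HP & HPd & Hth & Hmax);
    [intros t Ht; apply supconv_continuity_pt; lra | exact Hlt |].
  destruct (supconv_attained th ltac:(lra)) as [z [Hz [Hsz _]]].
  assert (Hvisc := Hsub _ _ _ th (Q th + z) ltac:(lra) (supconv_test_C1 P Pd HP)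
                     (supconv_test_touches_above P a c th z ltac:(lra) ltac:(lra) Hth Hsz Hmax)).
  simpl in Hvisc; replace (Q th + z - Q th) with z in Hvisc by ring.
  assert (Hr : Rabs (z / dl) <= 2 * K).
  { unfold Rdiv; rewrite Rabs_mult, Rabs_inv, (Rabs_pos_eq dl) by lra.
    apply Rmult_le_reg_r with dl; [exact dl_gt0 |].
    rewrite Rmult_assoc, Rinv_l by lra; lra. }
  assert (Hy : Rabs (Q th + z - Q th) <= 2 * K * dl)
    by (replace (Q th + z - Q th) with z by ring; exact Hz).
  generalize (Hstrict th (Q th + z) (z / dl) ltac:(lra) Hr Hy).
  replace (- (z * Qd th) / dl) with (- (z / dl * Qd th)) in Hvisc by (field; lra).
  lra.
Qed.

End SupConvolution.

Section AntitoneAlongCurves.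

Variables (H U : R -> R -> R) (T K : R) (Q Qd G Gd : R -> R).
Hypothesis H_cont : forall x p, continuity_2d_pt H x p.
Hypothesis U_lip : strip_lipschitz T K U.
Hypothesis K_ge0 : 0 <= K.
Hypothesis U_sub : visc_sub H T U.
Hypothesis Q_C1 : C1_R Q Qd.
Hypothesis G_C1 : C1_R G Gd.
Hypothesis G_calibrates : forall t r, 0 < t < T -> r * Qd t - H (Q t) r <= Gd t.

Lemma visc_sub_antitone_approx (a b eps : R) :
  0 < a -> a < b -> b < T -> 0 < eps ->
  exists dl0, 0 < dl0 /\ forall dl, 0 < dl -> dl <= dl0 ->
    U b (Q b) - G b - eps * b <= U a (Q a) - G a - eps * a + K * K * dl / 2.
Proof.
  intros Ha Hab HbT Heps.
  set (c := (b + T) / 2).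
  destruct (continuity_ab_maj (fun t => Rabs (Q t)) a c ltac:(unfold c; lra))
    as [tm [HB _]]; [intros t _; generalize (C1_R_continuity_pt Q Qd Q_C1 t); intros; reg |].
  set (B := Rabs (Q tm)).
  destruct (uniform_continuity_2d H (- (B + 1)) (B + 1) (- (2 * K + 1)) (2 * K + 1)
              (fun x p _ _ => H_cont x p) (mkposreal eps Heps)) as [du Hdu].
  assert (Hdu0 := cond_pos du).
  set (dl0 := Rmin 1 du / (2 * K + 1)).
  assert (Hmin : 0 < Rmin 1 du) by (apply Rmin_pos; lra).
  assert (Hdl0 : 0 < dl0) by (unfold dl0; apply Rdiv_lt_0_compat; lra).
  exists dl0; split; [exact Hdl0 |]; intros dl Hdl Hdldl0.
  assert (Hrad : 2 * K * dl < Rmin 1 du).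
  { assert (E : (2 * K + 1) * dl0 = Rmin 1 du) by (unfold dl0; field; lra). nra. }
  assert (Hrad1 := Rlt_le_trans _ _ _ Hrad (Rmin_l 1 du)).
  assert (Hradu := Rlt_le_trans _ _ _ Hrad (Rmin_r 1 du)).
  (* Tilting G by eps t makes the calibration strict, with enough room to absorb
     the change of H when its first argument moves by at most 2 K dl < du. *)
  set (Ge := fun t => G t + eps * t).
  assert (HGe : C1_R Ge (fun t => Gd t + eps)) by exact (C1_R_plus_linear G Gd eps G_C1).
  assert (Hstrict : forall t y r, a < t < c -> Rabs r <= 2 * K ->
                      Rabs (y - Q t) <= 2 * K * dl -> r * Qd t - H y r < Gd t + eps).
  { intros t y r Ht Hr Hy.
    assert (HQt := HB t ltac:(lra)); fold B in HQt.
    apply Rabs_le_between in HQt; apply Rabs_le_between in Hr; apply Rabs_le_between in Hy.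
    assert (Hclose := Hdu (Q t) r y r ltac:(lra) ltac:(lra) ltac:(lra) ltac:(lra)
                       ltac:(apply Rabs_lt_between; lra)
                       ltac:(rewrite Rminus_diag, Rabs_R0; exact Hdu0)).
    apply Rabs_lt_between in Hclose; simpl in Hclose.
    generalize (G_calibrates t r ltac:(unfold c in *; lra)); lra. }
  generalize (supconv_ge U T K dl Q Ge U_lip K_ge0 Hdl b ltac:(lra)),
    (supconv_antitone U T K dl Q Qd Ge _ U_lip K_ge0 Hdl Q_C1 HGe H a b c
       U_sub Ha Hab ltac:(unfold c; lra) ltac:(unfold c; lra) Hstrict),
    (supconv_le U T K dl Q Ge U_lip K_ge0 Hdl a ltac:(lra)).
  unfold Ge; lra.
Qed.

Lemma visc_sub_antitone_along (a b : R) :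
  0 < a -> a < b -> b < T -> U b (Q b) - G b <= U a (Q a) - G a.
Proof.
  intros Ha Hab HbT; apply Rle_plus_epsilon; intros e He.
  destruct (visc_sub_antitone_approx a b (e / (2 * (b - a))) Ha Hab HbT
              ltac:(apply Rdiv_lt_0_compat; lra)) as [dl0 [Hdl0 Happrox]].
  set (dl := Rmin dl0 (e / (K * K + 1))).
  assert (HKK : 0 <= K * K) by nra.
  assert (Hdl : 0 < dl) by (apply Rmin_pos; [| apply Rdiv_lt_0_compat]; lra).
  assert (HKdl : K * K * dl <= e).
  { apply Rle_trans with (K * K * (e / (K * K + 1)));
      [apply Rmult_le_compat_l, Rmin_r; exact HKK |].
    apply Rmult_le_reg_r with (K * K + 1); [lra |].
    replace (K * K * (e / (K * K + 1)) * (K * K + 1)) with (K * K * e) by (field; lra).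
    nra. }
  generalize (Happrox dl Hdl (Rmin_l _ _)).
  replace (e / (2 * (b - a)) * b) with (e / (2 * (b - a)) * a + e / 2) by (field; lra).
  lra.
Qed.

End AntitoneAlongCurves.

Lemma hamiltonian_curve_calibration (H : R -> R -> R) (T : R) (q q' : R -> R) :
  C3 H -> CVX H -> 0 < T -> in_RT H T q -> deriv_on 0 T q q' ->
  exists Q Qd G Gd, C1_R Q Qd /\ C1_R G Gd /\ G 0 = 0 /\
    (forall t, 0 < t < T -> Q t = q t) /\
    (forall t r, 0 < t < T -> r * Qd t - H (Q t) r <= Gd t) /\
    RInt (fun s => Lag H (q s) (q' s)) 0 T = G T.
Proof.
  intros HC3 HCVX HT [qd [p [pd [Hq [[Hp _] Hham]]]]] Hq'.
  destruct (C1_on_extend 0 T q qd HT Hq) as (Q & Qd & HQ & HQq).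
  set (pc := fun s => p (clamp 0 T s)).
  assert (Hpc : forall s, continuous pc s)
    by (apply cont_on_clamp; [lra | exact (deriv_on_cont_on _ _ _ _ Hp)]).
  set (l := fun s => pc s * Qd s - H (Q s) (pc s)).
  assert (Hl : forall s, continuous l s).
  { intros s; apply (continuous_minus (fun s => pc s * Qd s) (fun s => H (Q s) (pc s))).
    - apply (continuous_mult pc Qd); [apply Hpc | apply HQ].
    - apply (continuous_comp_2 Q pc H); [| apply Hpc |].
      + apply continuity_pt_filterlim, (C1_R_continuity_pt Q Qd HQ).
      + apply continuity_2d_pt_filterlim, C3_continuity_2d, HC3. }
  assert (Hl_eq : forall t, 0 < t < T -> l t = p t * dpH H (q t) (p t) - H (q t) (p t)).
  { intros t Ht; unfold l, pc; rewrite clamp_id, (proj1 (HQq t Ht)), (proj2 (HQq t Ht)) by lra.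
    rewrite (proj1 (Hham t ltac:(lra))); reflexivity. }
  exists Q, Qd, (fun s => RInt l 0 s), l; split; [exact HQ |]; split;
    [intros s; split; [apply is_derive_RInt_continuous, Hl | apply Hl] |]; split;
    [exact (RInt_point 0 l) | split; [intros t Ht; apply HQq, Ht | split]].
  - intros t r Ht; rewrite Hl_eq, (proj1 (HQq t Ht)), (proj2 (HQq t Ht)) by exact Ht.
    rewrite (proj1 (Hham t ltac:(lra))).
    generalize (CVX_supporting_line H HC3 HCVX (q t) (p t) r); nra.
  - apply RInt_ext; rewrite Rmin_left, Rmax_right by lra; intros s Hs.
    assert (Hq's : q' s = qd s).
    { destruct Hq as [Hqd _].
      transitivity (Derive q s); [symmetry |]; apply is_derive_unique;
        [exact (deriv_on_is_derive _ _ _ _ s Hq' Hs)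
        | exact (deriv_on_is_derive _ _ _ _ s Hqd Hs)]. }
    rewrite Hl_eq, Hq's, (proj1 (Hham s ltac:(lra))), Lag_dpH by auto; reflexivity.
Qed.

Lemma visc_sub_action_bound (H U : R -> R -> R) (T K : R) (q q' : R -> R) :
  C3 H -> CVX H -> 0 < T -> strip_lipschitz T K U -> 0 <= K -> visc_sub H T U ->
  in_RT H T q -> deriv_on 0 T q q' ->
  U T (q T) - RInt (fun s => Lag H (q s) (q' s)) 0 T <= U 0 (q 0).
Proof.
  intros HC3 HCVX HT HU HK Hsub Hq Hq'.
  destruct (hamiltonian_curve_calibration H T q q' HC3 HCVX HT Hq Hq')
    as (Q & Qd & G & Gd & HQ & HG & HG0 & HQq & Hcal & ->).
  enough (U T (q T) - G T <= U 0 (q 0) - G 0) by lra.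
  apply (cont_on_antitone_endpoints 0 T (fun t => U t (q t) - G t) HT).
  - apply cont_on_minus.
    + apply (strip_lipschitz_cont_on T K U q HU HK), (deriv_on_cont_on _ _ _ _ Hq').
    + apply continuous_cont_on; intros t.
      apply (ex_derive_continuous G); exists (Gd t); apply HG.
  - intros s t Hs Hst HtT.
    rewrite <- (HQq s ltac:(lra)), <- (HQq t ltac:(lra)).
    exact (visc_sub_antitone_along H U T K Q Qd G Gd (C3_continuity_2d H HC3) HU HK Hsub
             HQ HG Hcal s t Hs Hst HtT).
Qed.

Theorem lemma5p7 (H : R -> R -> R) (T : R) (W : R -> R) :
  C3 H -> CNH H -> CVX H -> 0 < T -> Lipschitz W ->
  (exists U0, I_HJ H T W U0) ->
  forall U0, I_HJ H T W U0 ->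
  forall x, Rbar_le (Ustar H T W x) (Finite (U0 x)).
Proof.
  intros HC3 _ HCVX HT _ _ U0 [_ [U [[HUlip [HU0 HUvisc]] HUT]]] x.
  destruct (Lipschitz_on_strip_nonneg T U HUlip) as [K [HK HU]].
  assert (Hsub : visc_sub H T U)
    by (intros phi phit phix t y Ht Hphi; apply (HUvisc phi phit phix t y Ht Hphi)).
  apply (proj2 (Lub_Rbar_correct _)); intros v [q [q' [Hq [Hq' [Hq0 ->]]]]]; simpl.
  rewrite <- HUT, <- HU0, <- Hq0.
  exact (visc_sub_action_bound H U T K q q' HC3 HCVX HT HU HK Hsub Hq Hq').
Qed.
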